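(* Let $K$ be an infinite, algebraically closed, totally ordered quasi-field of characteristic $1$. The natural map from $K\{X_1,\dots,X_n\}$ to the quasi-ring of polynomial functions $K^n\to K$, sending the class of $P$ to $x\mapsto P(x)$, is well defined and is an isomorphism of quasi-rings.
   Context: A quasi-field of characteristic $1$ is a commutative semiring $K$ with $1+1=1$ in which every nonzero element is multiplicatively invertible; ordered by $u\le v$ iff $u+v=v$, totally ordered meaning the order is total. $K$ is algebraically closed if every nonconstant polynomial of $K[X]$ has a root in $K$ (a point where it vanishes or where the maximum of the values of its monomials is attained at least twice). $K\{X_1,\dots,X_n\}$ is the image of $K[X_1,\dots,X_n]$ in its quasi-field of fractions, i.e. the quotient by $P\sim Q$ iff $RP=RQ$ for some nonzero $R$ (rational polynomials). Polynomial functions form a quasi-ring under pointwise addition ($\max$) and multiplication. *)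

From HB Require Import structures.
From mathcomp Require Import all_boot all_order all_algebra.
Set Implicit Arguments. Unset Strict Implicit. Unset Printing Implicit Defensive.
Import GRing.Theory.
Local Open Scope ring_scope.

Definition quasi_field_char1 (K : comNzSemiRingType) : Prop :=
  (1 + 1 = 1 :> K) /\ (forall x : K, x != 0 -> exists y : K, x * y = 1).

Definition qle (K : comNzSemiRingType) (u v : K) : Prop := u + v = v.
Definition totally_ordered (K : comNzSemiRingType) : Prop :=
  forall u v : K, qle u v \/ qle v u.

Definition infinite_type (K : eqType) : Prop :=
  forall s : seq K, exists x : K, x \notin s.

(* root of a univariate polynomial: it vanishes there, or the maximum
   (= the sum) of the values of its monomials is attained at least twice *)
Definition qroot (K : comNzSemiRingType) (p : {poly K}) (x : K) : Prop :=
  p.[x] = 0 \/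
  exists i j : nat, i <> j /\ p`_i * x ^+ i = p.[x] /\ p`_j * x ^+ j = p.[x].

Definition alg_closed (K : comNzSemiRingType) : Prop :=
  forall p : {poly K}, (1 < size p)%N -> exists x : K, qroot p x.

(* ---------- polynomials in n variables ----------
   A polynomial of K[X_1,...,X_n] is represented by a finite list of
   monomials (c, e) standing for c * X^e, with e : n.-tuple nat the
   exponent vector.  Two lists represent the same formal polynomial iff
   they have the same coefficient function [mcoef]. *)
Definition mpoly (K : comNzSemiRingType) (n : nat) := seq (K * n.-tuple nat).

Section MPoly.
Variables (K : comNzSemiRingType) (n : nat).

Definition mcoef (P : mpoly K n) (e : n.-tuple nat) : K :=
  \sum_(m <- P | m.2 == e) m.1.

Definition mpeq (P Q : mpoly K n) : Prop := forall e, mcoef P e = mcoef Q e.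

Definition mp_nonzero (P : mpoly K n) : Prop := exists e, mcoef P e != 0.

Definition mp0 : mpoly K n := [::].
Definition mp1 : mpoly K n := [:: (1, [tuple of nseq n 0%N])].
Definition mpadd (P Q : mpoly K n) : mpoly K n := P ++ Q.
Definition mpmul (P Q : mpoly K n) : mpoly K n :=
  [seq (m.1 * m'.1, [tuple (tnth m.2 i + tnth m'.2 i)%N | i < n])
  | m : K * n.-tuple nat <- P, m' : K * n.-tuple nat <- Q].

Definition meval (P : mpoly K n) (x : n.-tuple K) : K :=
  \sum_(m <- P) m.1 * \prod_(i < n) tnth x i ^+ tnth m.2 i.

(* P ~ Q iff R P = R Q for some nonzero R: equality of classes in
   K{X_1,...,X_n} *)
Definition rat_equiv (P Q : mpoly K n) : Prop :=
  exists R : mpoly K n, mp_nonzero R /\ mpeq (mpmul R P) (mpmul R Q).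

Definition poly_fun (f : n.-tuple K -> K) : Prop :=
  exists P : mpoly K n, forall x, f x = meval P x.

End MPoly.

(* The morphism laws and surjectivity are immediate; the content is that
   R P = R Q for some nonzero R  iff  P and Q define the same function.
   - Well-definedness (rat_equiv_eval): on the torus (all coordinates nonzero)
     R(x) is invertible and cancels; and a polynomial function is determined
     by its values on the torus, because K has arbitrarily small nonzero
     elements (torus_ext).
   - Injectivity (eval_rat_equiv): the nonzero elements of K form a
     divisible totally ordered abelian group.  If c x^e <= P(x) on the torus,
     Fourier-Motzkin elimination over this group (fourier_motzkin) yields
     terms m_1, ..., m_D of P whose exponents add up to D e and whose
     coefficients have product >= c^D (dominated_certificate); from them we
     build a telescoping R with R c X^e <= R P coefficientwise
     (telescope_absorbs).  Multiplying such R over all terms of Q, and of P,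
     gives R Q <= R P <= R Q. *)

From HB Require Import structures.
From mathcomp Require Import all_boot all_order all_algebra.
From mathcomp Require Import zify.
From Stdlib Require Import ClassicalEpsilon Classical.
Local Open Scope ring_scope.

Set Implicit Arguments. Unset Strict Implicit. Unset Printing Implicit Defensive.
Import GRing.Theory Num.Theory Order.TTheory.

Section IdempotentOrder.
Variable K : comNzSemiRingType.
Hypothesis one_idem : 1 + 1 = 1 :> K.
Local Notation le := (@qle K).

Lemma addxx (x : K) : x + x = x.
Proof. by rewrite -{1 2}[x]mulr1 -mulrDr one_idem mulr1. Qed.

Lemma qle_refl (x : K) : le x x. Proof. exact: addxx. Qed.

Lemma qle_trans (a b c : K) : le a b -> le b c -> le a c.
Proof. by rewrite /qle => h1 h2; rewrite -h2 addrA h1. Qed.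

Lemma qle_anti (a b : K) : le a b -> le b a -> a = b.
Proof. by rewrite /qle => h1 h2; rewrite -h1 addrC h2. Qed.

Lemma qle0 (a : K) : le 0 a. Proof. by rewrite /qle add0r. Qed.

Lemma qle0_eq0 (a : K) : le a 0 -> a = 0. Proof. by rewrite /qle addr0. Qed.

Lemma qle_addl (a b : K) : le a (a + b). Proof. by rewrite /qle addrA addxx. Qed.

Lemma qle_addr (a b : K) : le b (a + b). Proof. by rewrite addrC; apply: qle_addl. Qed.

Lemma qle_add (a b c : K) : le a c -> le b c -> le (a + b) c.
Proof. by rewrite /qle => h1 h2; rewrite -addrA h2 h1. Qed.

Lemma qle_mulr (a b c : K) : le a b -> le (a * c) (b * c).
Proof. by rewrite /qle => h; rewrite -mulrDl h. Qed.

Lemma qle_mull (a b c : K) : le a b -> le (c * a) (c * b).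
Proof. by rewrite ![c * _]mulrC; apply: qle_mulr. Qed.

Lemma qle_mul (a b c d : K) : le a b -> le c d -> le (a * c) (b * d).
Proof. by move=> h1 h2; apply: qle_trans (qle_mulr c h1) (qle_mull b h2). Qed.

Lemma qle_sum (I : eqType) (r : seq I) (P : pred I) (F : I -> K) (T : K) :
  (forall i, i \in r -> P i -> le (F i) T) -> le (\sum_(i <- r | P i) F i) T.
Proof.
move=> h; rewrite big_seq_cond; apply: (big_ind (fun s => le s T)).
- exact: qle0.
- by move=> x y; apply: qle_add.
- by move=> i /andP[]; apply: h.
Qed.

Lemma qle_term (I : eqType) (r : seq I) (P : pred I) (F : I -> K) (i : I) :
  i \in r -> P i -> le (F i) (\sum_(j <- r | P j) F j).
Proof.
elim: r => [//|a r IH]; rewrite inE big_cons => /orP[/eqP <-|hi] hP.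
  by rewrite hP; apply: qle_addl.
case: ifP => _; last exact: IH.
by apply: qle_trans (IH hi hP) _; apply: qle_addr.
Qed.

Lemma qle_prod (I : Type) (r : seq I) (P : pred I) (F1 F2 : I -> K) :
  (forall i, le (F1 i) (F2 i)) ->
  le (\prod_(i <- r | P i) F1 i) (\prod_(i <- r | P i) F2 i).
Proof.
move=> h; apply: (big_ind2 le) => //.
by move=> a b c d; apply: qle_mul.
Qed.

Lemma qle_exp1 (t : K) (k : nat) : le t 1 -> le (t ^+ k) 1.
Proof.
move=> h; elim: k => [|k IH]; first by rewrite expr0; apply: qle_refl.
by rewrite exprS -[1]mulr1; apply: qle_mul.
Qed.

Lemma add_neq0 (a b : K) : a != 0 -> a + b != 0.
Proof.
move=> ha; apply: contra ha => /eqP ab0; apply/eqP/qle0_eq0.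
by rewrite -ab0; apply: qle_addl.
Qed.

Definition qlt (u v : K) : Prop := le u v /\ u <> v.

Lemma qlt_irr (a : K) : ~ qlt a a. Proof. by case. Qed.

Lemma qlt_nle (a b : K) : qlt a b -> ~ le b a.
Proof. by case=> h1 h2 h3; apply: h2; apply: qle_anti. Qed.

Lemma qle_lt_trans (a b c : K) : le a b -> qlt b c -> qlt a c.
Proof.
move=> h1 [h2 h3]; split; first exact: qle_trans h2.
by move=> e; subst c; apply: h3; apply: qle_anti.
Qed.

Lemma sum_is_term (tot : totally_ordered K)
    (I : eqType) (r : seq I) (P : pred I) (F : I -> K) :
  \sum_(i <- r | P i) F i = 0 \/
  exists i, [/\ i \in r, P i & \sum_(i <- r | P i) F i = F i].
Proof.
elim: r => [|a r IH]; first by left; rewrite big_nil.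
rewrite big_cons; case: ifP => hPa; last first.
  case: IH => [->|[i [hi hP ->]]]; first by left.
  by right; exists i; rewrite inE hi orbT.
case: IH => [->|[i [hi hP ->]]].
  by right; exists a; rewrite mem_head addr0.
case: (tot (F a) (F i)) => h; right.
  by exists i; rewrite inE hi orbT.
by exists a; rewrite mem_head addrC.
Qed.

End IdempotentOrder.

Section Units.
Variable K : comNzSemiRingType.

Definition qinv (x : K) : K := epsilon (inhabits 0) (fun y => x * y = 1).
Definition qunitb (x : K) : bool := x * qinv x == 1.

Lemma qunitbP (x : K) : reflect (exists y, x * y = 1) (qunitb x).
Proof.
apply: (iffP eqP) => [h|h]; first by exists (qinv x).
exact: (epsilon_spec (inhabits 0) (fun y => x * y = 1) h).
Qed.

Lemma qunitb1 : qunitb (1 : K).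
Proof. by apply/qunitbP; exists 1; rewrite mulr1. Qed.

Lemma qunitbM (x y : K) : qunitb x -> qunitb y -> qunitb (x * y).
Proof.
move=> /qunitbP[a ha] /qunitbP[b hb]; apply/qunitbP; exists (a * b).
by rewrite mulrACA ha hb mulr1.
Qed.

Lemma qunitbV (x : K) : qunitb x -> qunitb (qinv x).
Proof. by move=> /eqP h; apply/qunitbP; exists x; rewrite mulrC. Qed.

(* The group of units of K, written additively so that the theory of
   Z-modules applies: + is the product of K, 0 is 1 and - is the inverse. *)
Definition qunit : Type := {x : K | qunitb x}.
HB.instance Definition _ := [Choice of qunit by <:].

Definition qunit_add (u v : qunit) : qunit :=
  exist _ (val u * val v) (qunitbM (valP u) (valP v)).
Definition qunit_zero : qunit := exist _ 1 qunitb1.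
Definition qunit_opp (u : qunit) : qunit :=
  exist _ (qinv (val u)) (qunitbV (valP u)).

Lemma qunit_addA : associative qunit_add.
Proof. by move=> a b c; apply: val_inj; rewrite /= mulrA. Qed.
Lemma qunit_addC : commutative qunit_add.
Proof. by move=> a b; apply: val_inj; rewrite /= mulrC. Qed.
Lemma qunit_add0 : left_id qunit_zero qunit_add.
Proof. by move=> a; apply: val_inj; rewrite /= mul1r. Qed.
Lemma qunit_addN : left_inverse qunit_zero qunit_opp qunit_add.
Proof. by move=> a; apply: val_inj; rewrite /= mulrC; apply/eqP/(valP a). Qed.
HB.instance Definition _ :=
  GRing.isZmodule.Build qunit qunit_addA qunit_addC qunit_add0 qunit_addN.

Lemma val_qunitD (u v : qunit) : val (u + v) = val u * val v. Proof. by []. Qed.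
Lemma val_qunit0 : val (0 : qunit) = 1. Proof. by []. Qed.

Lemma val_qunitN (u : qunit) : val (- u) * val u = 1.
Proof. by rewrite -val_qunitD addNr. Qed.

Lemma val_qunitMn (u : qunit) (k : nat) : val (u *+ k) = val u ^+ k.
Proof.
elim: k => [|k IH]; first by rewrite mulr0n expr0.
by rewrite mulrS val_qunitD IH exprS.
Qed.

Lemma val_qunit_sum (I : Type) (r : seq I) (F : I -> qunit) :
  val (\sum_(i <- r) F i) = \prod_(i <- r) val (F i).
Proof. exact: (big_morph val val_qunitD val_qunit0). Qed.

End Units.

Section Semifield.
Variable K : comNzSemiRingType.
Hypothesis hinv : forall x : K, x != 0 -> exists y, x * y = 1.

Lemma qunitbE (x : K) : qunitb x = (x != 0).
Proof.
apply/idP/idP => [/qunitbP[y hy]|/hinv/qunitbP //].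
by apply/eqP => x0; move/eqP: hy; rewrite x0 mul0r eq_sym oner_eq0.
Qed.

Lemma mulqV (x : K) : x != 0 -> x * qinv x = 1.
Proof. by rewrite -qunitbE => /eqP. Qed.

Lemma qmul_neq0 (a b : K) : a != 0 -> b != 0 -> a * b != 0.
Proof. by rewrite -!qunitbE; apply: qunitbM. Qed.

Lemma qexpr_neq0 (a : K) (k : nat) : a != 0 -> a ^+ k != 0.
Proof.
by move=> h; elim: k => [|k IH]; rewrite ?expr0 ?oner_neq0 // exprS qmul_neq0.
Qed.

Lemma qinv_neq0 (x : K) : x != 0 -> qinv x != 0.
Proof. by rewrite -!qunitbE; apply: qunitbV. Qed.

Lemma val_qunit_neq0 (g : qunit K) : val g != 0.
Proof. by rewrite -qunitbE; apply: valP. Qed.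

Definition to_qunit (x : K) : qunit K := insubd (0 : qunit K) x.

Lemma to_qunitK (x : K) : x != 0 -> val (to_qunit x) = x.
Proof. by move=> h; rewrite /to_qunit val_insubd qunitbE h. Qed.

End Semifield.

(* For a totally ordered quasi-field of characteristic 1, the units form a
   totally ordered abelian group, whose negative cone is below1.  It is
   nontrivial when K is infinite, and divisible when K is algebraically
   closed (a root of X^k + g is a k-th root of g). *)
Section UnitOrder.
Variable K : comNzSemiRingType.
Hypothesis hqf : quasi_field_char1 K.
Hypothesis htot : totally_ordered K.
Local Notation le := (@qle K).
Local Notation lt := (@qlt K).
Local Notation G := (qunit K).

Definition below1 (g : G) : Prop := lt (val g) 1.

Lemma below1_sub (g h : G) : below1 (g - h) <-> lt (val g) (val h).
Proof.
rewrite /below1 /qlt /qle val_qunitD; have hN := val_qunitN h.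
split=> -[h1 h2]; split.
- by have := congr1 (fun z => z * val h) h1; rewrite mulrDl -mulrA hN mulr1 mul1r.
- by move=> e; apply: h2; rewrite e mulrC.
- by have := congr1 (fun z => z * val (- h)) h1; rewrite mulrDl [val h * _]mulrC hN.
- by move=> e; apply: h2; rewrite -[val g]mulr1 -hN mulrA e mul1r.
Qed.

Lemma below1D (a b : G) : below1 a -> below1 b -> below1 (a + b).
Proof.
move=> [a1 a2] [b1 b2]; rewrite /below1 val_qunitD.
have hab : le (val a * val b) (val b) by rewrite -{2}[val b]mul1r; apply: qle_mulr.
split; first exact: qle_trans hab b1.
by move=> e; apply: b2; apply: qle_anti => //; rewrite -e.
Qed.

Lemma below1_0 : ~ below1 0. Proof. by case. Qed.

Lemma below1_trichotomy (a : G) : a = 0 \/ below1 a \/ below1 (- a).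
Proof.
case: (altP (val a =P 1)) => [e|ne]; first by left; apply: val_inj; rewrite e.
right; case: (htot (val a) 1) => h; first by left; split => //; apply/eqP.
right; split.
  by have := congr1 (fun z => z * val (- a)) h; rewrite mulrDl mul1r mulrC val_qunitN.
move=> e; apply: (negP ne); apply/eqP.
by rewrite -[val a]mul1r -e val_qunitN.
Qed.

Lemma not_below1 (g : G) : ~ below1 g -> le 1 (val g).
Proof.
move=> hg; case: (htot (val g) 1) => // h.
case: (altP (val g =P 1)) => [->|ne]; first exact: hqf.1.
by case: hg; split=> //; apply/eqP.
Qed.

Lemma exists_below1 : infinite_type K -> exists e : G, below1 e.
Proof.
move=> hinf; have [x] := hinf [:: 0; 1]; rewrite !inE negb_or => /andP[x0 x1].
have : to_qunit x != 0.
  by apply: contra x1 => /eqP e; rewrite -(to_qunitK hqf.2 x0) e.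
move=> /eqP ne; case: (below1_trichotomy (to_qunit x)) => [//|[h|h]].
  by exists (to_qunit x).
by exists (- to_qunit x).
Qed.

Lemma qunit_divisible : alg_closed K ->
  forall (g : G) (k : nat), (0 < k)%N -> exists h : G, h *+ k = g.
Proof.
move=> hac g k hk.
pose p : {poly K} := 'X^k + (val g)%:P.
have hs : size p = k.+1.
  by rewrite /p size_polyDl size_polyXn // size_polyC; case: (val g != 0).
have [x hx] : exists x, qroot p x by apply: hac; rewrite hs ltnS.
have hv : p.[x] = x ^+ k + val g by rewrite /p hornerD hornerXn hornerC.
have hg0 := val_qunit_neq0 hqf.2 g.
have hv0 : p.[x] != 0 by rewrite hv addrC; apply: add_neq0 hqf.1 _ _ hg0.
have hk0 : k != 0%N by rewrite -lt0n.
have coef_p i : p`_i = (i == k)%:R + (if i == 0%N then val g else 0).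
  by rewrite /p coefD coefXn coefC.
have max_at i : p`_i * x ^+ i = p.[x] -> i = k \/ i = 0%N.
  move=> h; case: (altP (i =P k)) => [|n1]; first by left.
  case: (altP (i =P 0%N)) => [|n2]; first by right.
  by move: hv0; rewrite -h coef_p (negbTE n1) (negbTE n2) add0r mul0r eqxx.
have c0 : p`_0 = val g by rewrite coef_p eq_sym (negbTE hk0) add0r.
have ck : p`_k = 1 by rewrite coef_p eqxx (negbTE hk0) addr0.
have hxk : x ^+ k = val g.
  case: hx => [e|[i [j [hij [hi hj]]]]]; first by move: hv0; rewrite e eqxx.
  case: (max_at _ hi) => ei; case: (max_at _ hj) => ej; subst; try by case: hij.
  - by rewrite -[x ^+ k]mul1r -ck hi -hj c0 expr0 mulr1.
  - by rewrite -[x ^+ k]mul1r -ck hj -hi c0 expr0 mulr1.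
have x0 : x != 0.
  by apply: contra hg0 => /eqP e; rewrite -hxk e expr0n (negbTE hk0).
by exists (to_qunit x); apply: val_inj; rewrite val_qunitMn (to_qunitK hqf.2).
Qed.

End UnitOrder.

(* The order is dense and unbounded when the group is
   nontrivial and divisible, which is what Fourier-Motzkin elimination needs. *)
Section OrderedGroup.
Variable G : zmodType.
Variable neg : G -> Prop.
Hypothesis negD : forall a b, neg a -> neg b -> neg (a + b).
Hypothesis neg0 : ~ neg 0.
Hypothesis negT : forall a, a = 0 \/ neg a \/ neg (- a).

Definition glt (a b : G) : Prop := neg (a - b).
Definition gle (a b : G) : Prop := a = b \/ glt a b.

Lemma glt_trans (a b c : G) : glt a b -> glt b c -> glt a c.
Proof. by rewrite /glt => h1 h2; have := negD h1 h2; rewrite addrA subrK. Qed.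

Lemma gle_lt_trans (a b c : G) : gle a b -> glt b c -> glt a c.
Proof. by case=> [->//|h1 h2]; apply: glt_trans h2. Qed.

Lemma glt_le_trans (a b c : G) : glt a b -> gle b c -> glt a c.
Proof. by move=> h1 [<-//|h2]; apply: glt_trans h2. Qed.

Lemma glt_total (a b : G) : a = b \/ glt a b \/ glt b a.
Proof.
case: (negT (a - b)) => [/eqP|[h|h]]; last by right; right; rewrite /glt -opprB.
  by rewrite subr_eq0 => /eqP; left.
by right; left.
Qed.

Lemma gltNN (a b : G) : glt (- a) (- b) <-> glt b a.
Proof. by rewrite /glt opprK addrC. Qed.

Lemma negMn (a : G) (k : nat) : (0 < k)%N -> neg a -> neg (a *+ k).
Proof.
case: k => // k _; elim: k => [|k IH] h; first by rewrite mulr1n.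
by rewrite mulrS; apply: negD => //; apply: IH.
Qed.

Lemma negMn_inv (a : G) (k : nat) : (0 < k)%N -> neg (a *+ k) -> neg a.
Proof.
move=> hk h; case: (negT a) => [a0|[//|na]].
  by move: h; rewrite a0 mul0rn => /neg0.
exfalso; apply: neg0; rewrite -(addrN (a *+ k)); apply: negD => //.
by rewrite -mulNrn; apply: negMn.
Qed.

Lemma gltMn (a b : G) (k : nat) : (0 < k)%N -> glt (a *+ k) (b *+ k) <-> glt a b.
Proof.
move=> hk; rewrite /glt -mulrnBl.
by split; [apply: negMn_inv hk|apply: negMn hk].
Qed.

Lemma gmax_exists (s : seq G) :
  s != [::] -> exists2 m, m \in s & forall g, g \in s -> gle g m.
Proof.
elim: s => [//|g s IH] _.
case: (altP (s =P [::])) => [->|/IH [m hm hs]].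
  by exists g; rewrite ?inE // => z; rewrite inE => /eqP->; left.
have hgs z : z \in g :: s -> z = g \/ z \in s by rewrite inE => /orP[/eqP|]; [left|right].
case: (glt_total g m) => [e|[l|l]].
- exists m; first by rewrite inE hm orbT.
  by move=> z /hgs [->|/hs]; [left|].
- exists m; first by rewrite inE hm orbT.
  by move=> z /hgs [->|/hs]; [right|].
- exists g; first by rewrite inE eqxx.
  by move=> z /hgs [->|/hs h]; [left|right; apply: gle_lt_trans h l].
Qed.

Lemma gmin_exists (s : seq G) :
  s != [::] -> exists2 m, m \in s & forall g, g \in s -> gle m g.
Proof.
move=> hs; have /gmax_exists[m] : [seq - g | g <- s] != [::] by case: s hs.
move=> /mapP[g0 hg0 ->] hle; exists g0 => // g hg.
by case: (hle (- g) (map_f _ hg)) => [/oppr_inj->|/gltNN]; [left|right].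
Qed.

Hypothesis negE : exists e, neg e.

Lemma below_all (s : seq G) : exists y, forall g, g \in s -> glt y g.
Proof.
have [e he] := negE.
have ltD g : glt (g + e) g by rewrite /glt addrC addKr.
case: (altP (s =P [::])) => [->|/gmin_exists[m _ hm]]; first by exists 0.
by exists (m + e) => g /hm; apply: glt_le_trans.
Qed.

Lemma above_all (s : seq G) : exists y, forall g, g \in s -> glt g y.
Proof.
have [y hy] := below_all [seq - g | g <- s].
by exists (- y) => g hg; rewrite -gltNN opprK; apply: hy; apply: map_f.
Qed.

Hypothesis divG : forall (g : G) (k : nat), (0 < k)%N -> exists h, h *+ k = g.

Lemma glt_between (a b : G) : glt a b -> exists y, glt a y /\ glt y b.
Proof.
move=> h; have two : (0 < 2)%N by [].
have [y hy] := divG (a + b) two.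
by exists y; split; apply/(gltMn _ _ two); rewrite hy mulr2n /glt opprD addrA addrK.
Qed.

Lemma separation (Ls Us : seq G) :
  (forall l u, l \in Ls -> u \in Us -> glt l u) ->
  exists y, (forall l, l \in Ls -> glt l y) /\ (forall u, u \in Us -> glt y u).
Proof.
move=> h.
case: (altP (Ls =P [::])) => [->|hL].
  by have [y hy] := below_all Us; exists y; split.
case: (altP (Us =P [::])) => [->|hU].
  by have [y hy] := above_all Ls; exists y; split.
have [m hm hmL] := gmax_exists hL; have [M hM hMU] := gmin_exists hU.
have [y [h1 h2]] := glt_between (h _ _ hm hM).
exists y; split => [l /hmL hl|u /hMU hu]; [exact: gle_lt_trans hl h1|exact: glt_le_trans h2 hu].
Qed.

Variable B : nat.

(* The constraint c stands for  c.1 + \sum_i c.2 i * x_i < 0. *)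
Definition cstr : Type := (G * {ffun 'I_B -> int})%type.
Definition cval (x : 'I_B -> G) (c : cstr) : G := c.1 + \sum_(i < B) x i *~ c.2 i.
Definition solves (x : 'I_B -> G) (L : seq cstr) : Prop :=
  forall c, c \in L -> neg (cval x c).

Definition sum_of (L : seq cstr) (w : cstr) : Prop :=
  exists cs : seq cstr, [/\ cs != [::], {subset cs <= L},
    forall i, \sum_(c <- cs) c.2 i = w.2 i & \sum_(c <- cs) c.1 = w.1].

Definition infeasible (L : seq cstr) : Prop :=
  exists w, [/\ sum_of L w, forall i, w.2 i = 0 & ~ neg w.1].

Lemma sum_of_trans (L L' : seq cstr) (w : cstr) :
  (forall w', w' \in L' -> sum_of L w') -> sum_of L' w -> sum_of L w.
Proof.
move=> hL' [cs' [ne sub s2 s1]].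
suff [cs [hne hs h2 h1]] : exists cs : seq cstr, [/\ cs != [::], {subset cs <= L},
    forall i, \sum_(c <- cs) c.2 i = \sum_(c <- cs') c.2 i
  & \sum_(c <- cs) c.1 = \sum_(c <- cs') c.1].
  by exists cs; split => // [i|]; rewrite ?h2 ?s2 ?h1 ?s1.
elim: cs' ne sub {s1 s2} => [//|w' cs' IH] _ sub.
have [cs [hne hs h2 h1]] := hL' w' (sub w' (mem_head _ _)).
have sub' : {subset cs' <= L'} by move=> z hz; apply: sub; rewrite inE hz orbT.
case: (altP (cs' =P [::])) => [->|/IH /(_ sub') [cs2 [_ hs2 h22 h21]]].
  by exists cs; split => // [i|]; rewrite big_seq1.
exists (cs ++ cs2); split; first by case: cs hne {hs h2 h1}.
- by move=> z; rewrite mem_cat => /orP[/hs|/hs2].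
- by move=> i; rewrite big_cat big_cons /= h2 h22.
- by rewrite big_cat big_cons /= h1 h21.
Qed.

(* Elimination of the unknown x_j: keep the constraints not involving x_j and
   add, for each p with positive and q with negative coefficient on x_j, the
   positive combination comb j p q in which x_j cancels. *)
Definition scoef (j : 'I_B) (c : cstr) : nat := `|c.2 j|%N.
Definition comb (j : 'I_B) (p q : cstr) : cstr :=
  (p.1 *+ scoef j q + q.1 *+ scoef j p,
   [ffun i => p.2 i *+ scoef j q + q.2 i *+ scoef j p]).
Definition pos_part (j : 'I_B) (L : seq cstr) := [seq c <- L | 0 < (c : cstr).2 j].
Definition neg_part (j : 'I_B) (L : seq cstr) := [seq c <- L | (c : cstr).2 j < 0].
Definition eliminate (j : 'I_B) (L : seq cstr) : seq cstr :=
  [seq c <- L | (c : cstr).2 j == 0] ++ [seq comb j p q | p <- pos_part j L, q <- neg_part j L].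

Lemma comb_j (j : 'I_B) (p q : cstr) : 0 < p.2 j -> q.2 j < 0 -> (comb j p q).2 j = 0.
Proof.
move=> hp hq; rewrite /comb /= ffunE /scoef.
rewrite -[X in X *+ _](gtz0_abs hp) -[X in _ + X *+ _]opprK -(ltz0_abs hq).
by rewrite mulNrn !pmulrn !mulrzz mulrC subrr.
Qed.

Lemma mem_eliminate (j : 'I_B) (L : seq cstr) (c : cstr) : c \in eliminate j L ->
  c \in L /\ c.2 j = 0 \/ exists p q, [/\ p \in L, q \in L, 0 < p.2 j, q.2 j < 0 & c = comb j p q].
Proof.
rewrite mem_cat mem_filter => /orP[/andP[/eqP hj hc]|/allpairsP[[p q] [hp hq ->]]].
  by left.
by move: hp hq; rewrite !mem_filter => /andP[hp0 hp] /andP[hq0 hq]; right; exists p, q.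
Qed.

Lemma eliminate_support (N : nat) (hN : (N < B)%N) (L : seq cstr) :
  (forall c, c \in L -> forall i : 'I_B, (N < i)%N -> c.2 i = 0) ->
  forall c, c \in eliminate (Ordinal hN) L -> forall i : 'I_B, (N <= i)%N -> c.2 i = 0.
Proof.
move=> hL c hc i; rewrite leq_eqVlt => /orP[/eqP hi|hi].
  have -> : i = Ordinal hN by apply: val_inj; rewrite /= hi.
  by case/mem_eliminate: hc => [[_ ->]|[p [q [_ _ hp hq ->]]]] //; apply: comb_j.
case/mem_eliminate: hc => [[hc _]|[p [q [hp hq _ _ ->]]]]; first exact: hL.
by rewrite /comb /= ffunE (hL p hp i hi) (hL q hq i hi) !mul0rn addr0.
Qed.

Lemma eliminate_sum_of (j : 'I_B) (L : seq cstr) (c : cstr) :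
  c \in eliminate j L -> sum_of L c.
Proof.
move=> /mem_eliminate[[hc _]|[p [q [hp hq hp0 hq0 ->]]]].
  by exists [:: c]; split => // [z|i|]; rewrite ?inE ?big_seq1 // => /eqP->.
exists (nseq (scoef j q) p ++ nseq (scoef j p) q); split.
- by rewrite /scoef; case: `|q.2 j|%N (absz_gt0 (q.2 j)) => //; rewrite (ltr0_neq0 hq0).
- by move=> z; rewrite mem_cat => /orP[] /nseqP [-> _].
- by move=> i; rewrite big_cat !big_nseq !iter_addr_0 /comb /= ffunE.
- by rewrite big_cat !big_nseq !iter_addr_0.
Qed.

Lemma eliminate_infeasible (j : 'I_B) (L : seq cstr) :
  infeasible (eliminate j L) -> infeasible L.
Proof.
move=> [w [hw h2 h1]]; exists w; split => //.
by apply: sum_of_trans hw => w' /eliminate_sum_of.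
Qed.

Lemma cval_comb (x : 'I_B -> G) (j : 'I_B) (p q : cstr) :
  cval x (comb j p q) = cval x p *+ scoef j q + cval x q *+ scoef j p.
Proof.
have mulrzMn (g : G) (z : int) k : g *~ (z *+ k) = g *~ z *+ k.
  by elim: k => [|k IH]; rewrite ?mulr0n ?mulr0z // !mulrS mulrzDr IH.
rewrite /cval /= (eq_bigr (fun i => (x i *~ p.2 i) *+ scoef j q + (x i *~ q.2 i) *+ scoef j p)).
  by rewrite big_split /= !mulrnDl !sumrMnl addrACA.
by move=> i _; rewrite ffunE mulrzDr !mulrzMn.
Qed.

Lemma cval_set (x : 'I_B -> G) (j : 'I_B) (y : G) (c : cstr) :
  cval (fun i => if i == j then y else x i) c =
  cval (fun i => if i == j then 0 else x i) c + y *~ c.2 j.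
Proof.
rewrite /cval -addrA; congr (_ + _).
rewrite [LHS](bigD1 j) //= [X in _ = X + _](bigD1 j) //= !eqxx mul0rz add0r addrC.
by congr (_ + _); apply: eq_bigr => i /negbTE ->.
Qed.

Definition gdiv (g : G) (k : nat) : G := epsilon (inhabits 0) (fun h => h *+ k = g).

Lemma gdivK (g : G) (k : nat) : (0 < k)%N -> gdiv g k *+ k = g.
Proof. by move=> hk; apply: (epsilon_spec (inhabits 0) (fun h => h *+ k = g) (divG g hk)). Qed.

(* A solution of the eliminated system extends to a solution of L: the
   constraints on x_j read lo q < x_j < up p, and the eliminated system says
   precisely that every lower bound lo q is below every upper bound up p. *)
Lemma eliminate_solution (j : 'I_B) (L : seq cstr) (x : 'I_B -> G) :
  solves x (eliminate j L) -> exists x', solves x' L.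
Proof.
move=> hx.
pose W := cval (fun i => if i == j then 0 else x i).
have W_free (c : cstr) : c.2 j = 0 -> cval x c = W c.
  move=> hc; have -> : cval x c = cval (fun i => if i == j then x j else x i) c.
    by rewrite /cval; congr (_ + _); apply: eq_bigr => i _; case: eqP => [->|].
  by rewrite cval_set hc mulr0z addr0.
pose lo (q : cstr) := gdiv (W q) (scoef j q).
pose up (p : cstr) := gdiv (- W p) (scoef j p).
have scoef_gt0 (c : cstr) : c.2 j != 0 -> (0 < scoef j c)%N by rewrite absz_gt0.
have upper (p : cstr) y : 0 < p.2 j -> neg (W p + y *~ p.2 j) <-> glt y (up p).
  move=> hp; have k0 := scoef_gt0 p (lt0r_neq0 hp).
  rewrite -(gltMn _ _ k0) gdivK // /glt addrC opprK.
  by rewrite /scoef pmulrn gtz0_abs.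
have lower (q : cstr) y : q.2 j < 0 -> neg (W q + y *~ q.2 j) <-> glt (lo q) y.
  move=> hq; have k0 := scoef_gt0 q (ltr0_neq0 hq).
  rewrite -(gltMn _ _ k0) gdivK // /glt.
  by rewrite /scoef pmulrn ltz0_abs // mulrNz opprK.
have [y [hlo hup]] : exists y,
    (forall z, z \in [seq lo q | q <- neg_part j L] -> glt z y) /\
    (forall z, z \in [seq up p | p <- pos_part j L] -> glt y z).
  apply: separation => // _ _ /mapP[q hq ->] /mapP[p hp ->].
  have [hp0 hq0] : 0 < p.2 j /\ q.2 j < 0.
    by move: hp hq; rewrite !mem_filter => /andP[-> _] /andP[-> _].
  have k0 : (0 < scoef j q * scoef j p)%N.
    by rewrite muln_gt0 !scoef_gt0 ?(lt0r_neq0 hp0) ?(ltr0_neq0 hq0).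
  have := hx (comb j p q); rewrite W_free ?comb_j // /W cval_comb -/W.
  rewrite -(gdivK (W q) (scoef_gt0 q (ltr0_neq0 hq0))) -/(lo q).
  rewrite -[W p]opprK -(gdivK (- W p) (scoef_gt0 p (lt0r_neq0 hp0))) -/(up p).
  rewrite mulNrn -!mulrnA mulnC -(gltMn _ _ k0) /glt addrC; apply.
  by rewrite mem_cat; apply/orP; right; apply/allpairsP; exists (p, q).
exists (fun i => if i == j then y else x i) => c hc; rewrite cval_set -/W.
case: (ltgtP (c.2 j) 0) => hcj.
- by apply/lower => //; apply: hlo; apply: map_f; rewrite mem_filter hcj.
- by apply/upper => //; apply: hup; apply: map_f; rewrite mem_filter hcj.
- rewrite hcj mulr0z addr0 -W_free //; apply: hx.
  by rewrite mem_cat mem_filter hcj eqxx hc.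
Qed.

Theorem fourier_motzkin (L : seq cstr) : (exists x, solves x L) \/ infeasible L.
Proof.
suff : forall N (L : seq cstr),
    (forall c, c \in L -> forall i : 'I_B, (N <= i)%N -> c.2 i = 0) ->
    (exists x, solves x L) \/ infeasible L.
  by move=> /(_ B L); apply=> c _ i; rewrite leqNgt ltn_ord.
elim=> [|N IH] {}L hL.
  case: (classic (exists2 c, c \in L & ~ neg c.1)) => [[c hc hn]|h].
    right; exists c; split=> //.
    - by exists [:: c]; split => // [z|i|]; rewrite ?inE ?big_seq1 // => /eqP->.
    - by move=> i; apply: hL.
  left; exists (fun _ => 0) => c hc; rewrite /cval big1 ?addr0 => [|i _].
    by apply: NNPP => hn; apply: h; exists c.
  by rewrite mul0rz.
case: (ltnP N B) => hNB; last first.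
  by apply: IH => c hc i hi; move: (leq_trans hNB hi); rewrite leqNgt ltn_ord.
by case: (IH _ (@eliminate_support _ hNB _ hL))
  => [[x /eliminate_solution]|/eliminate_infeasible]; [left|right].
Qed.

End OrderedGroup.

Lemma small_nonzero (K : comNzSemiRingType) (hqf : quasi_field_char1 K)
    (htot : totally_ordered K) (hinf : infinite_type K) (C : K) (s : seq K) :
  C != 0 -> (forall u, u \in s -> u != 0) ->
  exists t : K, [/\ t != 0, qle t 1 & forall u, u \in s -> qlt (t * C) u].
Proof.
move=> C0 hs; have [hidem hinv] := hqf.
have [y hy] := below_all (@below1D K) (below1_trichotomy htot) (exists_below1 hqf htot hinf)
  (0 :: [seq to_qunit (u * qinv C) | u <- s]).
exists (val y); split; first exact: val_qunit_neq0.
  by have := hy 0 (mem_head _ _); rewrite /glt below1_sub => -[].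
move=> u hu; have /hy : to_qunit (u * qinv C) \in 0 :: [seq to_qunit (u * qinv C) | u <- s].
  by rewrite inE (map_f (fun u => to_qunit (u * qinv C))) ?orbT.
have uC0 : u * qinv C != 0 by apply: qmul_neq0 (hs _ hu) (qinv_neq0 hinv C0).
rewrite /glt below1_sub to_qunitK // => -[le_yu ne_yu].
have uK : u * qinv C * C = u by rewrite -mulrA [qinv C * C]mulrC (mulqV hinv C0) mulr1.
split; first by rewrite -uK; apply: qle_mulr.
by move=> e; apply: ne_yu; rewrite -e -mulrA (mulqV hinv C0) mulr1.
Qed.

Section Evaluation.
Variables (K : comNzSemiRingType) (n : nat).
Implicit Types (P Q : mpoly K n) (x : n.-tuple K) (e f : n.-tuple nat).

Definition mon x e : K := \prod_(i < n) tnth x i ^+ tnth e i.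
Definition addt e f : n.-tuple nat := [tuple (tnth e i + tnth f i)%N | i < n].

Lemma addtC e f : addt e f = addt f e.
Proof. by apply: eq_from_tnth => i; rewrite !tnth_mktuple addnC. Qed.

Lemma addtA e1 e2 e3 : addt e1 (addt e2 e3) = addt (addt e1 e2) e3.
Proof. by apply: eq_from_tnth => i; rewrite !tnth_mktuple addnA. Qed.

Lemma mon_addt x e f : mon x (addt e f) = mon x e * mon x f.
Proof. by rewrite /mon -big_split; apply: eq_bigr => i _; rewrite tnth_mktuple exprD. Qed.

Lemma mevalE P x : meval P x = \sum_(m <- P) m.1 * mon x m.2. Proof. by []. Qed.

Lemma meval0 x : meval (mp0 K n) x = 0. Proof. by rewrite /meval big_nil. Qed.

Lemma meval1 x : meval (mp1 K n) x = 1.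
Proof. by rewrite /meval big_seq1 /= mul1r big1 // => i _; rewrite tnth_nseq expr0. Qed.

Lemma meval_add P Q x : meval (mpadd P Q) x = meval P x + meval Q x.
Proof. by rewrite /meval big_cat. Qed.

Lemma meval_mul P Q x : meval (mpmul P Q) x = meval P x * meval Q x.
Proof.
rewrite /meval /mpmul big_allpairs_dep /= mulr_suml; apply: eq_bigr => m _.
rewrite mulr_sumr; apply: eq_bigr => m' _ /=.
by rewrite -/(mon x m.2) -/(mon x m'.2) -[\prod_(i < n) _]/(mon x (addt m.2 m'.2))
  mon_addt mulrACA.
Qed.

Lemma mem_mpmul P Q z : z \in mpmul P Q ->
  exists m m', [/\ m \in P, m' \in Q & z = (m.1 * m'.1, addt m.2 m'.2)].
Proof. by move/allpairsP => [[m m'] [h1 h2 ->]]; exists m, m'. Qed.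

Lemma mpmul_mem P Q m m' :
  m \in P -> m' \in Q -> (m.1 * m'.1, addt m.2 m'.2) \in mpmul P Q.
Proof. by move=> h1 h2; apply/allpairsP; exists (m, m'). Qed.

Lemma meval_coef P x (S : seq (n.-tuple nat)) :
  uniq S -> {subset [seq m.2 | m <- P] <= S} ->
  meval P x = \sum_(f <- S) mcoef P f * mon x f.
Proof.
move=> uS sub; rewrite /mcoef.
under [RHS]eq_bigr do rewrite mulr_suml big_mkcond /=.
rewrite exchange_big; apply: eq_big_seq => m hm.
rewrite [RHS](bigD1_seq m.2) ?sub ?map_f //= eqxx [X in _ + X]big1 ?addr0 // => f.
by rewrite eq_sym => /negbTE ->.
Qed.

Lemma meval_mpeq P Q x : mpeq P Q -> meval P x = meval Q x.
Proof.
move=> h; pose S := undup [seq m.2 | m <- P ++ Q].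
have subS R : {subset R <= P ++ Q} -> {subset [seq m.2 | m <- R] <= S}.
  by move=> hR f /mapP[m /hR hm ->]; rewrite mem_undup map_f.
rewrite (@meval_coef P x S) ?(@meval_coef Q x S) ?undup_uniq //.
- by apply: eq_bigr => f _; rewrite h.
- by apply: subS => m hm; rewrite mem_cat hm orbT.
- by apply: subS => m hm; rewrite mem_cat hm.
Qed.

End Evaluation.

(* If R P = R Q formally
   with R nonzero, then R(x) P(x) = R(x) Q(x), and R(x) is invertible on the
   torus (all coordinates nonzero), so P and Q agree there.  A function given
   by a polynomial is determined by its values on the torus: replacing the
   zero coordinates of x by a small t changes P(x) by at most t * C. *)
Section WellDefined.
Variables (K : comNzSemiRingType) (n : nat).
Hypothesis hqf : quasi_field_char1 K.
Hypothesis htot : totally_ordered K.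
Local Notation le := (@qle K).
Local Notation lt := (@qlt K).
Implicit Types (P Q R : mpoly K n) (x : n.-tuple K) (e : n.-tuple nat).

Definition torus x : Prop := forall i, tnth x i != 0.

Lemma mon_neq0 x e : torus x -> mon x e != 0.
Proof.
move=> hx; apply: (big_ind (fun z : K => z != 0)) => [|a b|i _].
- exact: oner_neq0.
- exact: (qmul_neq0 hqf.2).
- exact: (qexpr_neq0 hqf.2).
Qed.

Lemma meval_neq0 R x : torus x -> mp_nonzero R -> meval R x != 0.
Proof.
move=> hx [e0]; rewrite /mcoef.
case: (sum_is_term htot R (fun m => m.2 == e0) (fun m => m.1)) => [->|[m [hm hme ->]]].
  by rewrite eqxx.
move=> m0; apply/eqP => R0.
have : le (m.1 * mon x m.2) (meval R x).
  exact: (qle_term hqf.1 (P := xpredT) (fun m => m.1 * mon x m.2) hm).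
rewrite R0 => /qle0_eq0 /eqP; apply/negP; exact: (qmul_neq0 hqf.2 m0 (mon_neq0 _ hx)).
Qed.

Definition perturb x (t : K) : n.-tuple K :=
  [tuple if tnth x i == 0 then t else tnth x i | i < n].

Lemma perturb_torus x t : t != 0 -> torus (perturb x t).
Proof. by move=> t0 i; rewrite tnth_mktuple; case: (altP (tnth x i =P 0)). Qed.

Definition free_at x (m : K * n.-tuple nat) : bool :=
  [forall i, (tnth x i == 0) ==> (tnth m.2 i == 0%N)].

Lemma mon_perturb_free x t m : free_at x m -> mon (perturb x t) m.2 = mon x m.2.
Proof.
move=> /forallP hz; apply: eq_bigr => i _; rewrite tnth_mktuple.
case: (altP (tnth x i =P 0)) => [xi0|//].
by have := hz i; rewrite xi0 eqxx /= => /eqP ->; rewrite !expr0.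
Qed.

Lemma mon_not_free x m : ~~ free_at x m -> mon x m.2 = 0.
Proof.
move=> /forallPn [i0]; rewrite negb_imply => /andP[/eqP h1 h2].
by rewrite /mon (bigD1 i0) //= h1 expr0n (negbTE h2) mul0r.
Qed.

Lemma mon_perturb_small x t m :
  le t 1 -> ~~ free_at x m -> le (mon (perturb x t) m.2) (t * mon (perturb x 1) m.2).
Proof.
move=> ht /forallPn [i0]; rewrite negb_imply => /andP[/eqP h1 h2].
rewrite /mon (bigD1 i0) //= [X in le _ (_ * X)](bigD1 i0) //= !tnth_mktuple h1 eqxx.
rewrite expr1n mul1r; apply: qle_mul => [|//].
  case: (tnth m.2 i0) h2 => // k _; rewrite exprS -[X in le _ X]mulr1.
  by apply: qle_mull; apply: qle_exp1 hqf.1 _ _ ht.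
apply: (qle_prod hqf.1) => i; rewrite !tnth_mktuple; case: (tnth x i == 0).
  by rewrite expr1n; apply: qle_exp1 hqf.1 _ _ ht.
exact: qle_refl hqf.1 _.
Qed.

Lemma meval_perturb P x t : le t 1 ->
  exists E, meval P (perturb x t) = meval P x + E /\ le E (t * meval P (perturb x 1)).
Proof.
move=> ht; exists (\sum_(m <- P | ~~ free_at x m) m.1 * mon (perturb x t) m.2); split.
  rewrite /meval (bigID (free_at x)) [in RHS](bigID (free_at x)) /=.
  rewrite [X in _ = _ + X + _]big1 ?addr0 => [|m /mon_not_free hm]; last first.
    by rewrite -/(mon _ _) hm mulr0.
  by congr (_ + _); apply: eq_bigr => m /mon_perturb_free hm; rewrite -/(mon _ _) hm.
apply: qle_sum => m hm hfree; apply: (@qle_trans _ _ (t * (m.1 * mon (perturb x 1) m.2))).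
  by rewrite mulrCA; apply/qle_mull/mon_perturb_small.
by apply/qle_mull; apply: (qle_term hqf.1 (P := xpredT) (fun m => m.1 * mon _ m.2)).
Qed.

Hypothesis hinf : infinite_type K.

Lemma torus_ext P Q :
  (forall x, torus x -> meval P x = meval Q x) -> forall x, meval P x = meval Q x.
Proof.
move=> h x; have [hidem hinv] := hqf.
pose C := meval P (perturb x 1) + meval Q (perturb x 1) + 1.
have C0 : C != 0 by rewrite /C addrC; apply: add_neq0 => //; apply: oner_neq0.
have [t [t0 t1 small]] : exists t, [/\ t != 0, le t 1 &
    forall u, u \in [seq u <- [:: meval P x; meval Q x] | u != 0] -> lt (t * C) u].
  by apply: small_nonzero => // u; rewrite mem_filter => /andP[].
have [EP [eP lP]] := meval_perturb P x t1.
have [EQ [eQ lQ]] := meval_perturb Q x t1.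
have lP' : le EP (t * C).
  by apply: qle_trans lP (qle_mull _ _); apply: qle_trans (qle_addl hidem _ _) (qle_addl hidem _ _).
have lQ' : le EQ (t * C).
  by apply: qle_trans lQ (qle_mull _ _); apply: qle_trans (qle_addr hidem _ _) (qle_addl hidem _ _).
have below u E : u \in [:: meval P x; meval Q x] -> u != 0 -> le E (t * C) ->
    u + E = u /\ lt E u.
  move=> hu u0 hE; have /small hs : u \in [seq u <- [:: meval P x; meval Q x] | u != 0].
    by rewrite mem_filter u0 hu.
  by split; [rewrite addrC; apply: qle_trans hE hs.1|apply: qle_lt_trans hE hs].
have inP : meval P x \in [:: meval P x; meval Q x] by rewrite mem_head.
have inQ : meval Q x \in [:: meval P x; meval Q x] by rewrite !inE eqxx orbT.
have := h _ (perturb_torus x t0); rewrite eP eQ.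
case: (altP (meval P x =P 0)) => P0; case: (altP (meval Q x =P 0)) => Q0.
- by rewrite P0 Q0.
- have [-> _] := below _ _ inQ Q0 lQ'; have [_ ltP] := below _ _ inQ Q0 lP'.
  by rewrite P0 add0r => e; move: ltP; rewrite e => /qlt_irr.
- have [-> _] := below _ _ inP P0 lP'; have [_ ltQ] := below _ _ inP P0 lQ'.
  by rewrite Q0 add0r => e; move: ltQ; rewrite -e => /qlt_irr.
- by rewrite (below _ _ inP P0 lP').1 (below _ _ inQ Q0 lQ').1.
Qed.

Lemma rat_equiv_eval P Q : rat_equiv P Q -> forall x, meval P x = meval Q x.
Proof.
move=> [R [R0 hR]]; apply: torus_ext => x hx.
have := meval_mpeq x hR; rewrite !meval_mul => e.
have := congr1 (fun z => qinv (meval R x) * z) e.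
by rewrite /= !mulrA ![qinv _ * _]mulrC (mulqV hqf.2 (meval_neq0 hx R0)) !mul1r.
Qed.

End WellDefined.

(* We find, for each nonzero term of Q, a
   polynomial absorbing it into P (telescope_absorbs), multiply
   them together, and do the same with P and Q exchanged. *)
Section Absorption.
Variables (K : comNzSemiRingType) (n : nat).
Hypothesis hqf : quasi_field_char1 K.
Local Notation le := (@qle K).
Local Notation term := (K * n.-tuple nat)%type.
Implicit Types (R S A B : mpoly K n).

Definition absorbs R A B : Prop := forall r a, r \in R -> a \in A ->
  r.1 * a.1 = 0 \/ exists r' b, [/\ r' \in R, b \in B,
    addt r'.2 b.2 = addt r.2 a.2 & le (r.1 * a.1) (r'.1 * b.1)].

Lemma absorbs_mulr R S A B : absorbs R A B -> absorbs (mpmul R S) A B.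
Proof.
move=> h rs a /mem_mpmul[r [s [hr hs ->]]] ha /=.
case: (h r a hr ha) => [z|[r' [b [hr' hb he hl]]]]; first by left; rewrite mulrAC z mul0r.
right; exists (r'.1 * s.1, addt r'.2 s.2), b; split => /=.
- exact: mpmul_mem.
- by [].
- by rewrite -addtA [addt s.2 b.2]addtC addtA he -addtA [addt a.2 s.2]addtC addtA.
- by rewrite mulrAC [r'.1 * s.1 * _]mulrAC; apply: qle_mulr.
Qed.

Lemma absorbs_mull R S A B : absorbs R A B -> absorbs (mpmul S R) A B.
Proof.
move=> h sr a /mem_mpmul[s [r [hs hr ->]]] ha /=.
case: (h r a hr ha) => [z|[r' [b [hr' hb he hl]]]]; first by left; rewrite -mulrA z mulr0.
right; exists (s.1 * r'.1, addt s.2 r'.2), b; split => //=.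
- exact: mpmul_mem.
- by rewrite -addtA he addtA.
- by rewrite -!mulrA; apply: qle_mull.
Qed.

Lemma absorbs_cons R (a : term) A B :
  absorbs R [:: a] B -> absorbs R A B -> absorbs R (a :: A) B.
Proof.
move=> ha hA r a' hr; rewrite inE => /orP[/eqP->|]; last exact: hA.
by apply: ha; rewrite ?mem_head.
Qed.

Lemma absorbs_coef R A B : absorbs R A B ->
  forall f, le (mcoef (mpmul R A) f) (mcoef (mpmul R B) f).
Proof.
move=> h f; apply: (qle_sum (P := fun m => m.2 == f)) => _ /mem_mpmul[r [a [hr ha ->]]] /eqP hf.
case: (h r a hr ha) => [/= ->|[r' [b [hr' hb he hl]]]]; first exact: qle0.
apply: qle_trans hl _.
apply: (qle_term hqf.1 (P := fun m => m.2 == f) (fun m : term => m.1)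
  (i := (r'.1 * b.1, addt r'.2 b.2))).
  exact: mpmul_mem.
by rewrite /= he -hf.
Qed.

Definition good R : Prop := exists2 r, r \in R & r.1 != 0.

Lemma good_mul R S : good R -> good S -> good (mpmul R S).
Proof.
move=> [r hr r0] [s hs s0]; exists (r.1 * s.1, addt r.2 s.2); first exact: mpmul_mem.
exact: (qmul_neq0 hqf.2).
Qed.

(* In characteristic 1 there is no cancellation: a good polynomial is nonzero. *)
Lemma good_nonzero R : good R -> mp_nonzero R.
Proof.
move=> [r hr r0]; exists r.2; apply: contra r0 => /eqP r20; apply/eqP/qle0_eq0.
by rewrite -r20; apply: (qle_term hqf.1 (P := fun m => m.2 == r.2) (fun m : term => m.1)).
Qed.

Lemma absorbs_all A B :
  (forall a, a \in A -> a.1 != 0 -> exists2 R, good R & absorbs R [:: a] B) ->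
  exists2 R, good R & absorbs R A B.
Proof.
elim: A => [|a A IH] h.
  exists (mp1 K n); last by move=> r a _; rewrite in_nil.
  by exists (1, [tuple of nseq n 0%N]); rewrite ?mem_head ?oner_neq0.
have [|R gR hR] := IH; first by move=> a' ha'; apply: h; rewrite inE ha' orbT.
case: (altP (a.1 =P 0)) => a0.
  exists R => //; apply: absorbs_cons hR => r a'' _; rewrite inE => /eqP->.
  by left; rewrite a0 mulr0.
have [Ra gRa hRa] := h a (mem_head _ _) a0.
exists (mpmul Ra R); first exact: good_mul.
by apply: absorbs_cons; [apply: absorbs_mulr|apply: absorbs_mull].
Qed.

(* If terms m_0, ..., m_(D-1) of B have exponents
   summing to D e and coefficients with product at least c^D, then
   R = \sum_(t < D) b_t X^(g_t) with b_t = \prod_(s < t) c / m_s and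
   g_t = t e + \sum_(s >= t) exp(m_s) absorbs c X^e into B: the term
   b_t c X^(g_t + e) equals b_(t+1) m_t X^(g_(t+1) + exp(m_t)) for t < D - 1,
   and is dominated by b_0 m_t X^(g_0 + exp(m_t)) for t = D - 1. *)
Lemma telescope_absorbs (c : K) (e : n.-tuple nat) (ms : seq term) B :
  c != 0 -> ms != [::] -> (forall m, m \in ms -> m \in B /\ m.1 != 0) ->
  (forall i, \sum_(m <- ms) tnth m.2 i = tnth e i * size ms)%N ->
  le (c ^+ size ms) (\prod_(m <- ms) m.1) ->
  exists2 R, good R & absorbs R [:: (c, e)] B.
Proof.
move=> c0 ms0 hms hexp hcoef; have [hidem hinv] := hqf; set D := size ms.
have D0 : (0 < D)%N by rewrite lt0n size_eq0.
pose b t := \prod_(s <- take t ms) (c * qinv s.1).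
pose g t : n.-tuple nat :=
  [tuple (t * tnth e i + \sum_(m <- drop t ms) tnth m.2 i)%N | i < n].
pose mt t := nth (c, e) ms t.
have b0 : b 0%N = 1 by rewrite /b take0 big_nil.
have b_succ t : (t < D)%N -> b t * c = b t.+1 * (mt t).1.
  move=> tD; have [_ m0] := hms _ (mem_nth (c, e) tD).
  by rewrite /b (take_nth (c, e) tD) big_rcons -!mulrA [qinv _ * _]mulrC mulqV ?mulr1.
have bD : le (b D) 1.
  rewrite /b take_size big_split /= big_const_seq count_predT iter_mulr_1.
  apply: qle_trans (qle_mulr _ hcoef) _; rewrite -big_split big1_seq => [|m /hms[_ m0]].
    exact: qle_refl.
  by rewrite /= mulqV.
have g_succ t : (t < D)%N -> addt (g t) e = addt (g t.+1) (mt t).2.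
  move=> tD; apply: eq_from_tnth => i; rewrite !tnth_mktuple (drop_nth (c, e) tD) big_cons.
  by rewrite -/(mt t); lia.
exists [seq (b t, g t) | t <- iota 0 D].
  by exists (b 0%N, g 0%N); [apply: map_f; rewrite mem_iota|rewrite b0 oner_neq0].
move=> r a /mapP[t]; rewrite mem_iota add0n => /andP[_ tD] -> /[1!inE] /eqP-> /=; right.
have [mB m0] := hms _ (mem_nth (c, e) tD).
case: (ltnP t.+1 D) => tD'.
  (* the term is matched exactly by the next term of R times m_t *)
  exists (b t.+1, g t.+1), (mt t); split => //; first by apply: map_f; rewrite mem_iota.
    by rewrite g_succ.
  by rewrite b_succ //; apply: qle_refl.
(* the last term is dominated by the first term of R times m_t *)
have eD : t.+1 = D by apply/eqP; rewrite eqn_leq tD tD'.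
exists (b 0%N, g 0%N), (mt t); split => //; first by apply: map_f; rewrite mem_iota.
  rewrite g_succ //; apply: eq_from_tnth => i; rewrite !tnth_mktuple drop0 hexp.
  by rewrite eD drop_size big_nil -/D; lia.
by rewrite b_succ // eD b0; apply: qle_mulr.
Qed.
End Absorption.

Lemma subset_map (T U : eqType) (f : T -> U) (s : seq T) (cs : seq U) :
  {subset cs <= map f s} -> exists ms, {subset ms <= s} /\ map f ms = cs.
Proof.
elim: cs => [|c cs IH] h; first by exists [::].
have [|ms [h1 h2]] := IH; first by move=> z hz; apply: h; rewrite inE hz orbT.
have /mapP[m hm ->] := h c (mem_head _ _).
exists (m :: ms); split; last by rewrite /= h2.
by move=> z; rewrite inE => /orP[/eqP->|/h1].
Qed.

(* Writing points of the torus
   as x = (g_1, ..., g_n) in the ordered group of units, the condition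
   "m X^(exp m) < c X^e at x" is a strict linear inequality in the g_i.  If
   c X^e <= P on the torus, the system of these inequalities for the nonzero
   terms m of P has no solution, so by Fourier-Motzkin some terms
   m_1, ..., m_D of P satisfy  sum exp(m_s) = D e  and  c^D <= prod m_s. *)
Section Domination.
Variables (K : comNzSemiRingType) (n : nat).
Hypothesis hqf : quasi_field_char1 K.
Hypothesis htot : totally_ordered K.
Local Notation G := (qunit K).
Local Notation le := (@qle K).
Local Notation lt := (@qlt K).

Definition term_cstr (c : K) (e : n.-tuple nat) (m : K * n.-tuple nat) : cstr G n :=
  (to_qunit m.1 - to_qunit c, [ffun i => (tnth m.2 i)%:Z - (tnth e i)%:Z]).

Definition unit_point (x : 'I_n -> G) : n.-tuple K := [tuple val (x i) | i < n].

Lemma cval_term_cstr (x : 'I_n -> G) (c : K) (e : n.-tuple nat) (m : K * n.-tuple nat) :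
  m.1 != 0 -> c != 0 ->
  below1 (cval x (term_cstr c e m)) <->
  lt (m.1 * mon (unit_point x) m.2) (c * mon (unit_point x) e).
Proof.
move=> m0 c0; pose Xs f := \sum_(i < n) x i *+ tnth f i.
have val_Xs f : val (Xs f) = mon (unit_point x) f.
  rewrite val_qunit_sum; apply: eq_bigr => i _.
  by rewrite val_qunitMn tnth_mktuple.
have -> : cval x (term_cstr c e m) = (to_qunit m.1 + Xs m.2) - (to_qunit c + Xs e).
  rewrite /cval /= opprD addrACA -sumrB; congr (_ + _).
  by apply: eq_bigr => i _; rewrite ffunE mulrzBl_nat -!pmulrn.
by rewrite below1_sub !val_qunitD !val_Xs !(to_qunitK hqf.2).
Qed.

Lemma dominated_certificate (P : mpoly K n) (c : K) (e : n.-tuple nat) :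
  infinite_type K -> alg_closed K -> c != 0 ->
  (forall x, torus x -> le (c * mon x e) (meval P x)) ->
  exists ms : seq (K * n.-tuple nat),
    [/\ ms != [::], forall m, m \in ms -> m \in P /\ m.1 != 0,
        forall i, (\sum_(m <- ms) tnth m.2 i = tnth e i * size ms)%N
      & le (c ^+ size ms) (\prod_(m <- ms) m.1)].
Proof.
move=> hinf hac c0 hdom; have [hidem hinv] := hqf.
pose Pn := [seq m <- P | m.1 != 0].
have := fourier_motzkin (@below1D K) (@below1_0 K) (below1_trichotomy htot)
  (exists_below1 hqf htot hinf) (qunit_divisible hqf hac) (map (term_cstr c e) Pn).
case=> [[x hx]|[w [[cs [cs0 csub cs2 cs1]] w2 w1]]].
  (* at a solution, every term of P, hence P itself, is below c X^e *)
  exfalso; set y := unit_point x.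
  have ty : torus y by move=> i; rewrite tnth_mktuple val_qunit_neq0.
  have pos0 : lt 0 (c * mon y e).
    by split; [apply: qle0|apply/eqP; rewrite eq_sym (qmul_neq0 hinv c0) ?mon_neq0].
  apply: qlt_nle (hdom y ty); rewrite mevalE.
  case: (sum_is_term htot P xpredT (fun m => m.1 * mon y m.2)) => [->//|[m [hm _ ->]]].
  case: (altP (m.1 =P 0)) => [->|m0]; first by rewrite mul0r.
  by apply/(cval_term_cstr x e m0 c0)/hx/map_f; rewrite mem_filter m0.
have [ms [hms ems]] := subset_map csub; rewrite -ems {cs ems csub} in cs0 cs1 cs2.
have hmsP m : m \in ms -> m \in P /\ m.1 != 0 by move/hms; rewrite mem_filter => /andP[].
have sumz (F : K * n.-tuple nat -> nat) :
    \sum_(m <- ms) (F m)%:Z = (\sum_(m <- ms) F m)%N%:Z.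
  by elim: (ms) => [|a s IH]; rewrite ?big_nil ?big_cons ?IH ?PoszD.
exists ms; split => //.
- by case: (ms) cs0.
- move=> i; have := cs2 i; rewrite w2 big_map.
  under eq_bigr do rewrite ffunE.
  rewrite sumrB !sumz big_const_seq count_predT iter_addn_0.
  by move=> /eqP; rewrite subr_eq0 => /eqP [].
- move: w1; rewrite -cs1 big_map => /(not_below1 hqf htot); rewrite val_qunit_sum.
  rewrite (eq_big_seq (fun m => m.1 * qinv c)) => [|m /hmsP[_ m0]]; last first.
    by rewrite val_qunitD /= !to_qunitK.
  rewrite big_split /= big_const_seq count_predT iter_mulr_1.
  move=> /(qle_mulr (c ^+ size ms)); rewrite mul1r -mulrA -exprMn.
  by rewrite [qinv c * c]mulrC mulqV // expr1n mulr1.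
Qed.

End Domination.

Lemma eval_rat_equiv (K : comNzSemiRingType) (n : nat) (P Q : mpoly K n) :
  quasi_field_char1 K -> totally_ordered K -> infinite_type K -> alg_closed K ->
  (forall x, meval P x = meval Q x) -> rat_equiv P Q.
Proof.
move=> hqf htot hinf hac hPQ.
(* each term of A is dominated by B on the torus, hence absorbed into B *)
have absorber (A B : mpoly K n) :
    (forall x, meval A x = meval B x) -> exists2 R, good R & absorbs R A B.
  move=> hAB; apply: (absorbs_all hqf) => -[c e] ha /= c0.
  have [|ms [ms0 hms hexp hcoef]] := @dominated_certificate K n hqf htot B c e hinf hac c0.
    move=> x _; rewrite -hAB mevalE.
    exact: (qle_term hqf.1 (P := xpredT) (fun m => m.1 * mon x m.2) ha).
  exact: (telescope_absorbs hqf c0 ms0 hms hexp hcoef).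
have [R1 g1 a1] := absorber Q P (fun x => esym (hPQ x)).
have [R2 g2 a2] := absorber P Q hPQ.
exists (mpmul R1 R2); split; first exact/(good_nonzero hqf)/(good_mul hqf).
move=> f; apply: qle_anti; apply: (absorbs_coef hqf).
  exact: absorbs_mull.
exact: absorbs_mulr.
Qed.

Unset Implicit Arguments.

Theorem theorem3p7 (K : comNzSemiRingType) (n : nat)
  (hqf : quasi_field_char1 K) (htot : totally_ordered K)
  (hinf : infinite_type K) (hac : alg_closed K) :
  (* the map [P] |-> (x |-> P(x)) is well defined on K{X} and injective *)
  (forall P Q : mpoly K n,
      rat_equiv P Q <-> (forall x, meval P x = meval Q x)) /\
  (* it is onto the polynomial functions *)
  (forall f : n.-tuple K -> K, poly_fun f ->
      exists P : mpoly K n, forall x, meval P x = f x) /\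
  (* it is a morphism of quasi-rings *)
  (forall x, meval (mp0 K n) x = 0) /\
  (forall x, meval (mp1 K n) x = 1) /\
  (forall (P Q : mpoly K n) x, meval (mpadd P Q) x = meval P x + meval Q x) /\
  (forall (P Q : mpoly K n) x, meval (mpmul P Q) x = meval P x * meval Q x).
Proof.
split.
  move=> P Q; split; first exact: (rat_equiv_eval hqf htot hinf).
  exact: (eval_rat_equiv hqf htot hinf hac).
split; first by move=> f [P hP]; exists P => x; rewrite hP.
split; first exact: meval0.
split; first exact: meval1.
split; first exact: meval_add.
exact: meval_mul.
Qed.
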